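(* Let $M$ be a finite set of items and $\preceq$ a monotone preference over $2^M$. If $\preceq$ satisfies satiation-only-at-the-top (in particular, if it satisfies non-satiation), then $\preceq$ can be represented by a submodular valuation. Consequently, the class of monotone preferences representable by a submodular valuation equals the class of monotone preferences satisfying satiation-only-at-the-top.
   Context: A monotone preference $\preceq$ is a complete and transitive weak order on $2^M$ with $S\preceq T$ whenever $S\subseteq T$; $S\prec T$ means $S\preceq T$ and not $T\preceq S$, and $S=T$ in preference means both $S\preceq T$ and $T\preceq S$. $\preceq$ satisfies non-satiation if $T\prec T\cup\{j\}$ for every $T$ and $j\notin T$. It satisfies satiation-only-at-the-top if for all sets $T\subset S$ and every item $j\notin S$: if $T$ and $T\cup\{j\}$ are indifferent, then $S$ and $S\cup\{j\}$ are indifferent. A valuation $v:2^M\to\mathbb R_{\ge0}$ with $v(\emptyset)=0$ represents $\preceq$ if $S\preceq T\iff v(S)\le v(T)$ and $S\prec T\iff v(S)<v(T)$; $v$ is submodular if $v(S)+v(T)\ge v(S\cup T)+v(S\cap T)$ for all $S,T$. *)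

From mathcomp Require Import all_boot all_order all_algebra.
From mathcomp Require Import Rstruct.
Set Implicit Arguments. Unset Strict Implicit. Unset Printing Implicit Defensive.
Import Order.TTheory GRing.Theory Num.Theory.
Local Open Scope ring_scope.

(* A preference on 2^M is a boolean relation [pref S T] read "S ⪯ T". *)
Definition preference (M : finType) := {set M} -> {set M} -> bool.

Section Prefs.
Variable M : finType.
Variable pref : preference M.

Definition strict_pref (S T : {set M}) : bool := pref S T && ~~ pref T S.
Definition indiff (S T : {set M}) : bool := pref S T && pref T S.

Definition monotone_preference : Prop :=
  [/\ (forall S T : {set M}, pref S T || pref T S),
      (forall S T U : {set M}, pref S T -> pref T U -> pref S U) &
      (forall S T : {set M}, S \subset T -> pref S T)].

Definition non_satiation : Prop :=
  forall (T : {set M}) (j : M), j \notin T -> strict_pref T (j |: T).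

Definition satiation_only_at_the_top : Prop :=
  forall (T S : {set M}) (j : M), T \proper S -> j \notin S ->
    indiff T (j |: T) -> indiff S (j |: S).

Definition represents (v : {set M} -> Rdefinitions.R) : Prop :=
  [/\ (forall S : {set M}, 0 <= v S), v set0 = 0,
      (forall S T : {set M}, pref S T <-> v S <= v T) &
      (forall S T : {set M}, strict_pref S T <-> v S < v T)].

Definition submodular (v : {set M} -> Rdefinitions.R) : Prop :=
  forall S T : {set M}, v (S :|: T) + v (S :&: T) <= v S + v T.

Definition representable_by_submodular : Prop :=
  exists v : {set M} -> Rdefinitions.R, represents v /\ submodular v.
End Prefs.

From mathcomp Require Import all_boot all_order all_algebra.
From mathcomp Require Import Rstruct.
Import Order.TTheory GRing.Theory Num.Theory.

Set Implicit Arguments.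
Unset Strict Implicit.
Unset Printing Implicit Defensive.

(** Let r(S) be the number of sets strictly worse than S; then S ⪯ T iff
    r(S) <= r(T), and v(S) = 1 - 2^-r(S) represents the preference.  For
    submodularity, write a, b, c, d for the ranks of S ∩ T, S, T, S ∪ T.
    If a < b and a < c, then 2^-b + 2^-c <= 2^-a because the weights halve.
    If a = b, i.e. S is indifferent to S ∩ T, then adding the items of S \ T
    to T one at a time never helps, by satiation-only-at-the-top, so d <= c.
    Conversely, submodularity on S and T + j gives v(S + j) - v(S) <=
    v(T + j) - v(T), so satiation at T propagates to every superset S. *)

Section HalfPowers.
Variable R : realFieldType.
Local Open Scope ring_scope.

Definition halfpow (n : nat) : R := 2^-1 ^+ n.

Lemma halfpow_ge0 n : 0 <= halfpow n.
Proof. by rewrite exprn_ge0 // invr_ge0. Qed.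

Lemma halfpow_le1 n : halfpow n <= 1.
Proof. by rewrite exprn_ile1 // ?invr_ge0 // invf_le1 // ler1n. Qed.

Lemma halfpow_le m n : (halfpow m <= halfpow n) = (n <= m)%N.
Proof. by rewrite ler_iXn2l // ?invr_gt0 // invf_lt1 // ltr1n. Qed.

Lemma halfpow_lt m n : (halfpow m < halfpow n) = (n < m)%N.
Proof. by rewrite ltNge halfpow_le -ltnNge. Qed.

Lemma halfpowS n : halfpow n.+1 = halfpow n / 2.
Proof. by rewrite /halfpow exprSr. Qed.

Lemma halfpow_exchange a b c d :
  (a <= b)%N -> (a <= c)%N -> (b = a -> d <= c)%N -> (c = a -> d <= b)%N ->
  halfpow b + halfpow c <= halfpow a + halfpow d.
Proof.
move=> leab leac bd cd.
have [eba|nba] := eqVneq b a; first by rewrite eba lerD2l halfpow_le bd.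
have [eca|nca] := eqVneq c a; first by rewrite eca addrC lerD2l halfpow_le cd.
have hb : halfpow b <= halfpow a / 2 by rewrite -halfpowS halfpow_le ltn_neqAle eq_sym nba.
have hc : halfpow c <= halfpow a / 2 by rewrite -halfpowS halfpow_le ltn_neqAle eq_sym nca.
by rewrite (le_trans (lerD hb hc)) // -splitr lerDl halfpow_ge0.
Qed.

End HalfPowers.

Section Preference.
Variables (M : finType) (pref : preference M).

Lemma non_satiation_satiation_only_at_the_top :
  non_satiation pref -> satiation_only_at_the_top pref.
Proof.
move=> nonsat T S j ltTS jNS /andP[_ pjT].
have jNT : j \notin T by apply: contra jNS; apply: (subsetP (proper_sub ltTS)).
by move: (nonsat T j jNT); rewrite /strict_pref pjT andbF.
Qed.

Hypothesis pref_total : forall S T : {set M}, pref S T || pref T S.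
Hypothesis pref_trans : forall S T U : {set M}, pref S T -> pref T U -> pref S U.
Hypothesis pref_subset : forall S T : {set M}, S \subset T -> pref S T.

Lemma submodular_satiation_only_at_the_top :
  representable_by_submodular pref -> satiation_only_at_the_top pref.
Proof.
case=> v [[_ _ pref_v _] subm] T S j ltTS jNS /andP[_ pjT].
have sTS := proper_sub ltTS.
have eU : S :|: (j |: T) = j |: S by rewrite setUCA (setUidPl sTS).
have eI : S :&: (j |: T) = T.
  have /eqP Sj0 : S :&: [set j] == set0 by rewrite setI_eq0 disjoint_sym disjoints1.
  by rewrite setIUr Sj0 set0U (setIidPr sTS).
have := subm S (j |: T); rewrite eU eI => sub_jT.
rewrite /indiff pref_subset ?subsetUr //=; apply/pref_v.
by rewrite -(lerD2r (v T)) (le_trans sub_jT) // lerD2l; apply/pref_v.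
Qed.

Definition pref_rank (S : {set M}) : nat := #|[set U | strict_pref pref U S]|.

Lemma strict_pref_le_trans U S T :
  strict_pref pref U S -> pref S T -> strict_pref pref U T.
Proof.
rewrite /strict_pref => /andP[pUS npSU] pST; rewrite (pref_trans pUS pST) /=.
by apply: contra npSU; apply: pref_trans.
Qed.

Lemma pref_rank_le S T : pref S T = (pref_rank S <= pref_rank T)%N.
Proof.
have lower_sub X Y : pref X Y ->
    [set U | strict_pref pref U X] \subset [set U | strict_pref pref U Y].
  by move=> pXY; apply/subsetP => U; rewrite !inE => /strict_pref_le_trans; apply.
apply/idP/idP => [/lower_sub/subset_leq_card //|]; apply: contraTT => npST.
have pTS : pref T S by move: (pref_total S T); rewrite (negbTE npST).
rewrite -ltnNge; apply/proper_card/properP; split; first exact: lower_sub.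
by exists T; rewrite !inE /strict_pref ?pTS ?npST ?andbN.
Qed.

Lemma strict_pref_rank S T : strict_pref pref S T = (pref_rank S < pref_rank T)%N.
Proof. by rewrite /strict_pref !pref_rank_le -ltnNge andb_idl // => /ltnW. Qed.

Lemma pref_rank_set0 : pref_rank set0 = 0%N.
Proof.
by apply: eq_card0 => U; rewrite !inE /strict_pref (pref_subset (sub0set U)) andbF.
Qed.

Definition rank_value (S : {set M}) : Rdefinitions.R := (1 - halfpow _ (pref_rank S))%R.

Lemma represents_rank_value : represents pref rank_value.
Proof.
split=> [S||S T|S T].
- by rewrite subr_ge0 halfpow_le1.
- by rewrite /rank_value pref_rank_set0 /halfpow expr0 subrr.
- by rewrite /rank_value lerD2l lerN2 halfpow_le pref_rank_le.
- by rewrite /rank_value ltrD2l ltrN2 halfpow_lt strict_pref_rank.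
Qed.

Hypothesis pref_soat : satiation_only_at_the_top pref.

Lemma satiated_item_superset (A Y : {set M}) (j : M) :
  A \subset Y -> pref (j |: A) A -> pref (j |: Y) Y.
Proof.
move=> sAY pjA.
have [jY|jNY] := boolP (j \in Y).
  by apply: pref_subset; rewrite subUset sub1set jY subxx.
have [<- //|neAY] := eqVneq A Y.
have ltAY : A \proper Y by rewrite properEneq neAY.
have indA : indiff pref A (j |: A) by rewrite /indiff pjA pref_subset ?subsetUr.
by case/andP: (pref_soat ltAY jNY indA).
Qed.

Lemma satiated_set_superset (D A Y : {set M}) :
  A \subset Y -> pref (D :|: A) A -> pref (D :|: Y) Y.
Proof.
rewrite -[D]set_enum; elim: (enum D) A Y => [|j s IHs] A Y sAY.
  by rewrite set_nil !set0U => _; apply: pref_subset.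
rewrite set_cons -!setUA => pjsA.
have psY : pref ([set:: s] :|: Y) Y.
  by apply: IHs sAY _; apply: pref_trans pjsA; apply/pref_subset/subsetUr.
apply: pref_trans psY; apply: (@satiated_item_superset ([set:: s] :|: A)).
  exact: setUS.
by apply: pref_trans pjsA _; apply/pref_subset/subsetUr.
Qed.

Lemma satiated_setU S T : pref S (S :&: T) -> pref (S :|: T) T.
Proof.
have /setUidPl eS := subsetIl S T.
by rewrite -{1}eS; apply: satiated_set_superset; apply: subsetIr.
Qed.

Lemma submodular_rank_value : submodular rank_value.
Proof.
have rank_setU S T : pref_rank S = pref_rank (S :&: T) ->
    (pref_rank (S :|: T) <= pref_rank T)%N.
  by move=> eST; rewrite -pref_rank_le satiated_setU // pref_rank_le eST.
move=> S T; rewrite /rank_value addrACA [leRHS]addrACA lerD2l -!opprD lerN2 [leRHS]addrC.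
apply: halfpow_exchange.
- by rewrite -pref_rank_le; apply: pref_subset; apply: subsetIl.
- by rewrite -pref_rank_le; apply: pref_subset; apply: subsetIr.
- exact: rank_setU.
- by rewrite setIC setUC; apply: rank_setU.
Qed.

End Preference.

Theorem mainTheorem9 (M : finType) (pref : preference M) :
  monotone_preference pref ->
  [/\ (satiation_only_at_the_top pref -> representable_by_submodular pref),
      (non_satiation pref -> representable_by_submodular pref) &
      (representable_by_submodular pref <-> satiation_only_at_the_top pref)].
Proof.
case=> total trans sub.
have soat_repr : satiation_only_at_the_top pref -> representable_by_submodular pref.
  move=> soat; exists (rank_value pref); split.
    exact: represents_rank_value.
  exact: submodular_rank_value.
split => //.
- by move/non_satiation_satiation_only_at_the_top.
- by split; [apply: submodular_satiation_only_at_the_top | apply: soat_repr].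
Qed.
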